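(* Let $X\in\mathbb{R}^{m\times n}$ with $m\geq n$, and let $X=U\Sigma V^\top$ be a singular value decomposition, where $U\in\mathbb{R}^{m\times m}$ and $V\in\mathbb{R}^{n\times n}$ satisfy $U^\top U=I$, $V^\top V=I$, and $\Sigma\in\mathbb{R}^{m\times n}$ is diagonal with diagonal entries $\sigma_i=\Sigma_{ii}$, $i=1,\dots,n$, which are nonzero and pairwise distinct in absolute value. Let $dX\in\mathbb{R}^{m\times n}$ be a variation of $X$ and $(dU,d\Sigma,dV)$ the induced variation of the SVD factors. Then $$d\Sigma=(U^\top dX\,V)_{diag},\qquad dV=2V\left(K^\top\circ(\Sigma^\top U^\top dX\, V)_{sym}\right),$$ where $K\in\mathbb{R}^{n\times n}$ is given by $K_{ij}=\frac{1}{\sigma_i^2-\sigma_j^2}$ for $i\neq j$ and $K_{ii}=0$. Moreover, writing $\Sigma_n\in\mathbb{R}^{n\times n}$ for the top $n$ rows of $\Sigma$, $U=(U_1\,|\,U_2)$ with $U_1\in\mathbb{R}^{m\times n}$, $U_2\in\mathbb{R}^{m\times(m-n)}$, and $dU=(dU_1\,|\,dU_2)$ with the same block sizes, $$dU=\bigl(C\Sigma_n^{-1}\,\big|\,-U_1\Sigma_n^{-1}C^\top U_2\bigr),\qquad C=dX\,V-U\,d\Sigma-U\Sigma\, dV^\top V.$$ Consequently, for a scalar function $L$ of $(U,\Sigma,V)$ with partial derivatives $\frac{\partial L}{\partial U},\frac{\partial L}{\partial \Sigma},\frac{\partial L}{\partial V}$, writing $\frac{\partial L}{\partial U}=\left(\left(\frac{\partial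 L}{\partial U}\right)_1\,\middle|\,\left(\frac{\partial L}{\partial U}\right)_2\right)$ with blocks of sizes $m\times n$ and $m\times(m-n)$, the partial derivative of $L\circ f$ (where $f(X)=(U,\Sigma,V)$) with respect to $X$ is $$\frac{\partial L\circ f}{\partial X}=DV^\top+U\left(\frac{\partial L}{\partial \Sigma}-U^\top D\right)_{diag}V^\top+2U\Sigma\left(K^\top\circ\left(V^\top\left(\frac{\partial L}{\partial V}-VD^\top U\Sigma\right)\right)\right)_{sym}V^\top,$$ where $D=\left(\frac{\partial L}{\partial U}\right)_1\Sigma_n^{-1}-U_2\left(\frac{\partial L}{\partial U}\right)_2^\top U_1\Sigma_n^{-1}$.
   Context: Notation: for a square matrix $A$, $A_{sym}=\frac12(A^\top+A)$; for any matrix $A$, $A_{diag}$ is the matrix of the same size equal to $A$ on the main diagonal and $0$ elsewhere; $\circ$ is the Hadamard (entrywise) product; $A:B=\operatorname{Tr}(A^\top B)=\sum_{ij}A_{ij}B_{ij}$. Variations are first-order perturbations: given $dX$, the induced variation of the SVD factors is a triple $(dU,d\Sigma,dV)$ with $d\Sigma$ diagonal (of the same shape as $\Sigma$), $U^\top dU+dU^\top U=0$, $V^\top dV+dV^\top V=0$, and $dX=dU\,\Sigma V^\top+U\,d\Sigma\, V^\top+U\Sigma\, dV^\top$; when $m>n$, the component $U_2^\top dU_2$ (not determined by these conditions) is taken to be $0$. The partial derivative of a scalar function $L$ with respect to a matrix argument $Y$ is the matrix $\frac{\partial L}{\partial Y}$ such that the first-order change of $L$ is $\frac{\partial L}{\partial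 Y}:dY$. The claimed formula for $\frac{\partial L\circ f}{\partial X}$ means: for every $dX$ with induced $(dU,d\Sigma,dV)$, $\frac{\partial L}{\partial U}:dU+\frac{\partial L}{\partial \Sigma}:d\Sigma+\frac{\partial L}{\partial V}:dV=\frac{\partial L\circ f}{\partial X}:dX$. *)

From HB Require Import structures.
From mathcomp Require Import all_boot all_order all_algebra.
Set Implicit Arguments. Unset Strict Implicit. Unset Printing Implicit Defensive.
Import Order.TTheory GRing.Theory Num.Theory.
Local Open Scope ring_scope.

Section Defs.
Variable R : realFieldType.

Definition mxdiagpart m n (A : 'M[R]_(m, n)) : 'M[R]_(m, n) :=
  \matrix_(i, j) if (i : nat) == (j : nat) then A i j else 0.

Definition is_rdiag m n (A : 'M[R]_(m, n)) : Prop :=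
  forall (i : 'I_m) (j : 'I_n), (i : nat) <> (j : nat) -> A i j = 0.

Definition mxsym n (A : 'M[R]_n) : 'M[R]_n := 2^-1 *: (A^T + A).

Definition hadamard m n (A B : 'M[R]_(m, n)) : 'M[R]_(m, n) :=
  \matrix_(i, j) (A i j * B i j).

Definition frob m n (A B : 'M[R]_(m, n)) : R := \tr (A^T *m B).

Definition sv n p (S : 'M[R]_(n + p, n)) (i : 'I_n) : R := S (lshift p i) i.

Definition Kmx n p (S : 'M[R]_(n + p, n)) : 'M[R]_n :=
  \matrix_(i, j) if i == j then 0 else (sv S i ^+ 2 - sv S j ^+ 2)^-1.

Definition induced_variation n p (U : 'M[R]_(n + p)) (S : 'M[R]_(n + p, n))
    (V : 'M[R]_n) (dX : 'M[R]_(n + p, n))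
    (dU : 'M[R]_(n + p)) (dS : 'M[R]_(n + p, n)) (dV : 'M[R]_n) : Prop :=
  [/\ is_rdiag dS,
      U^T *m dU + dU^T *m U = 0,
      V^T *m dV + dV^T *m V = 0,
      dX = dU *m S *m V^T + U *m dS *m V^T + U *m S *m dV^T
    & (rsubmx U)^T *m rsubmx dU = 0 ].

End Defs.

(* Write dU = U Om_U and dV = V Om_V.  The orthogonality constraints make Om_U and
   Om_V skew-symmetric, and the variation equation becomes
   U^T dX V = Om_U S + dS - S Om_V.  Skew matrices vanish on the diagonal, which
   gives dS.  In the symmetric part of S^T U^T dX V the Om_U terms cancel and the
   off-diagonal entries are (s_j^2 - s_i^2) (Om_V)_ij, which gives dV.  Next
   C = dU S = dU_1 S_n gives dU_1, and dU_2 is recovered from U U^T = 1, the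
   normalisation U_2^T dU_2 = 0 and the skewness of U^T dU.  The gradient formula
   follows by transposing each of these linear maps for the pairing A : B. *)

From HB Require Import structures.
From mathcomp Require Import all_boot all_order all_algebra.
From mathcomp Require Import ring.
Import Order.TTheory GRing.Theory Num.Theory.
Local Open Scope ring_scope.

Set Implicit Arguments. Unset Strict Implicit.

Section MatrixEntries.
Variables (V : zmodType) (m n : nat) (A B : 'M[V]_(m, n)) (i : 'I_m) (j : 'I_n).

Lemma addmxE : (A + B) i j = A i j + B i j.
Proof. by rewrite mxE. Qed.

Lemma oppmxE : (- A) i j = - A i j.
Proof. by rewrite mxE. Qed.

End MatrixEntries.

Section FrobeniusPairing.
Variable R : realFieldType.

Lemma frobE m n (A B : 'M[R]_(m, n)) : frob A B = \sum_i \sum_j A i j * B i j.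
Proof.
rewrite /frob /mxtrace [RHS]exchange_big; apply: eq_bigr => j _; rewrite mxE.
by apply: eq_bigr => i _; rewrite !mxE.
Qed.

Lemma frobC m n (A B : 'M[R]_(m, n)) : frob A B = frob B A.
Proof. by rewrite /frob -mxtrace_tr trmx_mul trmxK. Qed.

Lemma frobDl m n (A B C : 'M[R]_(m, n)) : frob (A + B) C = frob A C + frob B C.
Proof. by rewrite /frob linearD /= mulmxDl mxtraceD. Qed.

Lemma frobZl m n a (A B : 'M[R]_(m, n)) : frob (a *: A) B = a * frob A B.
Proof. by rewrite /frob linearZ /= -scalemxAl mxtraceZ. Qed.

Lemma frobNl m n (A B : 'M[R]_(m, n)) : frob (- A) B = - frob A B.
Proof. by rewrite -scaleN1r frobZl mulN1r. Qed.

Lemma frobBl m n (A B C : 'M[R]_(m, n)) : frob (A - B) C = frob A C - frob B C.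
Proof. by rewrite frobDl frobNl. Qed.

Lemma frobZr m n a (A B : 'M[R]_(m, n)) : frob A (a *: B) = a * frob A B.
Proof. by rewrite !(frobC A) frobZl. Qed.

Lemma frobBr m n (A B C : 'M[R]_(m, n)) : frob A (B - C) = frob A B - frob A C.
Proof. by rewrite !(frobC A) frobBl. Qed.

Lemma frobNr m n (A B : 'M[R]_(m, n)) : frob A (- B) = - frob A B.
Proof. by rewrite !(frobC A) frobNl. Qed.

Lemma frob_mulmxl m k n (A : 'M[R]_(m, n)) (B : 'M[R]_(m, k)) (C : 'M[R]_(k, n)) :
  frob A (B *m C) = frob (B^T *m A) C.
Proof. by rewrite /frob trmx_mul trmxK mulmxA. Qed.

Lemma frob_mulmxr m k n (A : 'M[R]_(m, n)) (B : 'M[R]_(m, k)) (C : 'M[R]_(k, n)) :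
  frob A (B *m C) = frob (A *m C^T) B.
Proof. by rewrite /frob trmx_mul trmxK mulmxA mxtrace_mulC mulmxA. Qed.

Lemma frob_trmx m n (A : 'M[R]_(m, n)) (B : 'M[R]_(n, m)) : frob A B^T = frob A^T B.
Proof. by rewrite /frob trmxK -mxtrace_tr trmx_mul !trmxK mxtrace_mulC. Qed.

Lemma frob_diagpart m n (A B : 'M[R]_(m, n)) :
  frob A (mxdiagpart B) = frob (mxdiagpart A) B.
Proof.
rewrite !frobE; apply: eq_bigr => i _; apply: eq_bigr => j _.
by rewrite !mxE; case: ifP; rewrite ?mulr0 ?mul0r.
Qed.

Lemma frob_hadamard m n (K A B : 'M[R]_(m, n)) :
  frob A (hadamard K B) = frob (hadamard K A) B.
Proof.
rewrite !frobE; apply: eq_bigr => i _; apply: eq_bigr => j _.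
by rewrite !mxE mulrCA mulrA.
Qed.

Lemma frob_sym n (A B : 'M[R]_n) : frob A (mxsym B) = frob (mxsym A) B.
Proof.
by rewrite /mxsym frobZr frobZl frobC !frobDl (frobC B^T) frob_trmx (frobC B).
Qed.

Lemma frob_row_mx m n1 n2 (A C : 'M[R]_(m, n1)) (B D : 'M[R]_(m, n2)) :
  frob (row_mx A B) (row_mx C D) = frob A C + frob B D.
Proof. by rewrite /frob tr_row_mx mul_col_row mxtrace_block. Qed.

End FrobeniusPairing.

Section RectangularDiagonal.
Variables (R : realFieldType) (n p : nat) (S : 'M[R]_(n + p, n)).
Hypothesis hS : is_rdiag S.

Lemma mulmx_rdiagE k (A : 'M[R]_(k, n + p)) i j :
  (A *m S) i j = A i (lshift p j) * sv S j.
Proof.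
rewrite mxE (bigD1 (lshift p j)) //= big1 ?addr0 // => l /eqP neq_lj.
by rewrite hS ?mulr0 // => eq_lj; apply: neq_lj; apply: val_inj.
Qed.

Lemma rdiag_mulmxE k (A : 'M[R]_(n, k)) i j :
  (S *m A) (lshift p i) j = sv S i * A i j.
Proof.
rewrite mxE (bigD1 i) //= big1 ?addr0 // => l /eqP neq_li.
by rewrite hS ?mul0r // => eq_il; apply: neq_li; apply: val_inj.
Qed.

Lemma tr_rdiag_mulmxE k (A : 'M[R]_(n + p, k)) i j :
  (S^T *m A) i j = sv S i * A (lshift p i) j.
Proof.
rewrite -[S^T *m A]trmxK trmx_mul trmxK mxE mulmx_rdiagE mxE mulrC.
by rewrite /sv; congr (_ * _).
Qed.

Lemma dsubmx_rdiag : dsubmx S = 0.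
Proof.
apply/matrixP => i j; rewrite !mxE hS //= => eq_ij.
by move: (ltn_ord j); rewrite -eq_ij ltnNge leq_addr.
Qed.

Lemma usubmx_rdiag : usubmx S = diag_mx (\row_i sv S i).
Proof.
apply/matrixP => i j; rewrite !mxE; case: eqP => [->|neq_ij]; first by rewrite mulr1n.
by rewrite mulr0n hS //= => eq_ij; apply: neq_ij; apply: val_inj.
Qed.

Lemma trmx_usubmx_rdiag : (usubmx S)^T = usubmx S.
Proof. by rewrite usubmx_rdiag tr_diag_mx. Qed.

Lemma mulmx_rdiag k (A : 'M[R]_(k, n + p)) : A *m S = lsubmx A *m usubmx S.
Proof. by rewrite -{1}[A]hsubmxK -{1}[S]vsubmxK mul_row_col dsubmx_rdiag mulmx0 addr0. Qed.

Lemma unitmx_usubmx_rdiag : (forall i, sv S i != 0) -> usubmx S \in unitmx.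
Proof.
move=> sv_neq0; rewrite unitmxE usubmx_rdiag det_diag unitfE.
by apply/prodf_neq0 => i _; rewrite mxE.
Qed.

End RectangularDiagonal.

Lemma skew_mxE (V : zmodType) k (M : 'M[V]_k) i j : M^T = - M -> M j i = - M i j.
Proof. by move=> skewM; rewrite -oppmxE -skewM mxE. Qed.

Lemma skew_diag0 (R : numDomainType) k (M : 'M[R]_k) i : M^T = - M -> M i i = 0.
Proof. by move/(skew_mxE i i)/esym/eqP; rewrite eqNr => /eqP. Qed.

Lemma orthogonal_variation_skew (R : comPzRingType) k l (U dU : 'M[R]_(k, l)) :
  U^T *m dU + dU^T *m U = 0 -> (U^T *m dU)^T = - (U^T *m dU).
Proof. by move/eqP; rewrite addrC addr_eq0 trmx_mul trmxK => /eqP. Qed.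

Lemma ursubmx_trmx_mul (R : pzSemiRingType) k n1 n2 m1 m2
    (A : 'M[R]_(k, n1 + n2)) (B : 'M[R]_(k, m1 + m2)) :
  ursubmx (A^T *m B) = (lsubmx A)^T *m rsubmx B.
Proof. by rewrite -{1}[A]hsubmxK -{1}[B]hsubmxK tr_row_mx mul_col_row block_mxKur. Qed.

Lemma subr_sqr_neq0 (R : realDomainType) (a b : R) :
  `|a| != `|b| -> a ^+ 2 - b ^+ 2 != 0.
Proof.
rewrite subr_eq0 -[a ^+ 2]real_normK ?num_real // -[b ^+ 2]real_normK ?num_real //.
by rewrite eqrXn2.
Qed.

Section InducedVariation.
Variables (R : realFieldType) (n p : nat).
Variables (U : 'M[R]_(n + p)) (S : 'M[R]_(n + p, n)) (V : 'M[R]_n).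
Variables (dX : 'M[R]_(n + p, n)) (dU : 'M[R]_(n + p)).
Variables (dS : 'M[R]_(n + p, n)) (dV : 'M[R]_n).
Hypotheses (hU : U^T *m U = 1%:M) (hV : V^T *m V = 1%:M) (hS : is_rdiag S).
Hypothesis hvar : induced_variation U S V dX dU dS dV.

Local Notation OmU := (U^T *m dU).
Local Notation OmV := (V^T *m dV).

Lemma skew_OmU : OmU^T = - OmU.
Proof. by case: hvar => _ hOmU _ _ _; apply: orthogonal_variation_skew. Qed.

Lemma skew_OmV : OmV^T = - OmV.
Proof. by case: hvar => _ _ hOmV _ _; apply: orthogonal_variation_skew. Qed.

Lemma dV_rotated : dV = V *m OmV.
Proof. by rewrite mulmxA (mulmx1C hV) mul1mx. Qed.

Lemma trmx_dV_mul : dV^T *m V = - OmV.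
Proof. by rewrite -skew_OmV trmx_mul trmxK. Qed.

Lemma variation_rotated : U^T *m dX *m V = OmU *m S + dS - S *m OmV.
Proof.
case: hvar => _ _ _ -> _.
rewrite !mulmxDr !mulmxDl -!mulmxA !(mulmxA _ U) hU hV trmx_dV_mul.
by rewrite !mul1mx !mulmx1 mulmxN mulmxA.
Qed.

Lemma variation_residual :
  dX *m V - U *m dS - U *m S *m dV^T *m V = dU *m S.
Proof.
case: hvar => _ _ _ -> _.
rewrite !mulmxDl -!(mulmxA _ V^T) hV !mulmx1 -!mulmxA.
by rewrite addrAC addrK addrK.
Qed.

Lemma dS_variation : dS = mxdiagpart (U^T *m dX *m V).
Proof.
case: hvar => hdS _ _ _ _; apply/matrixP => i j; rewrite [RHS]mxE.
case: eqP => [eq_ij | neq_ij]; last exact: hdS.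
have -> : i = lshift p j by apply: val_inj.
rewrite variation_rotated !(addmxE, oppmxE) mulmx_rdiagE // rdiag_mulmxE //.
by rewrite (skew_diag0 _ skew_OmU) (skew_diag0 _ skew_OmV) mul0r mulr0 add0r subr0.
Qed.

Lemma sym_rotated_offdiag i j : i != j ->
  (mxsym (S^T *m (U^T *m dX *m V))) i j
    = 2^-1 * ((sv S j ^+ 2 - sv S i ^+ 2) * OmV i j).
Proof.
move=> neq_ij; case: hvar => hdS _ _ _ _.
have neq_ij_nat (a b : 'I_n) : a != b -> (lshift p a : nat) <> b.
  by move=> /eqP neq_ab eq_ab; apply: neq_ab; apply: val_inj.
rewrite mxE addmxE mxE !tr_rdiag_mulmxE // variation_rotated !(addmxE, oppmxE).
rewrite !mulmx_rdiagE // !rdiag_mulmxE // !hdS; last 2 first.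
- exact: neq_ij_nat.
- by apply: neq_ij_nat; rewrite eq_sym.
rewrite (skew_mxE (lshift p i) (lshift p j) skew_OmU) (skew_mxE i j skew_OmV).
ring.
Qed.

Lemma dV_variation : (forall i j : 'I_n, i != j -> `|sv S i| != `|sv S j|) ->
  dV = 2%:R *: (V *m hadamard (Kmx S)^T (mxsym (S^T *m U^T *m dX *m V))).
Proof.
move=> hdist; rewrite {1}dV_rotated scalemxAr -!(mulmxA S^T); congr (_ *m _).
apply/matrixP => i j; move: (@sym_rotated_offdiag i j); move: (mxsym _) => M symE.
rewrite /hadamard /Kmx ![in RHS]mxE.
have [<- | neq_ij] := eqVneq i j; first by rewrite (skew_diag0 _ skew_OmV) !mul0r mulr0.
rewrite symE //.
have sqr_neq0 : sv S j ^+ 2 - sv S i ^+ 2 != 0.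
  by apply/subr_sqr_neq0/hdist; rewrite eq_sym.
by field.
Qed.

Lemma rsubmx_dU : rsubmx dU = - (lsubmx U *m (lsubmx dU)^T *m rsubmx U).
Proof.
case: hvar => _ /eqP hOmU _ _ gauge.
have offdiag : (lsubmx U)^T *m rsubmx dU = - ((lsubmx dU)^T *m rsubmx U).
  rewrite -!ursubmx_trmx_mul; move: hOmU; rewrite addr_eq0 => /eqP ->.
  by rewrite /ursubmx !linearN.
have UUt : U *m U^T = lsubmx U *m (lsubmx U)^T + rsubmx U *m (rsubmx U)^T.
  by rewrite -{1 2}[U]hsubmxK tr_row_mx mul_row_col.
rewrite -[rsubmx dU]mul1mx -(mulmx1C hU) UUt mulmxDl -!mulmxA offdiag gauge.
by rewrite mulmx0 addr0 mulmxN !mulmxA.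
Qed.

Lemma dU_variation : (forall i, sv S i != 0) ->
  let C := dX *m V - U *m dS - U *m S *m dV^T *m V in
  dU = row_mx (C *m invmx (usubmx S))
              (- (lsubmx U *m invmx (usubmx S) *m C^T *m rsubmx U)).
Proof.
move=> /(unitmx_usubmx_rdiag hS) Sn_unit C.
rewrite /C variation_residual mulmx_rdiag // mulmxK // trmx_mul trmx_usubmx_rdiag //.
by rewrite !mulmxA mulmxKV // -rsubmx_dU hsubmxK.
Qed.

End InducedVariation.

Section VariationAdjoints.
Variable R : realFieldType.

Lemma frob_split_adj n p (G U : 'M[R]_(n + p)) (C : 'M[R]_(n + p, n)) (Si : 'M[R]_n) :
  frob G (row_mx (C *m Si) (- (lsubmx U *m Si *m C^T *m rsubmx U)))
  = frob (lsubmx G *m Si^T - rsubmx U *m (rsubmx G)^T *m lsubmx U *m Si) C.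
Proof.
rewrite -{1}[G]hsubmxK frob_row_mx frobNr frobBl frob_mulmxr.
rewrite (frob_mulmxr (rsubmx G)) frob_mulmxl frob_trmx; congr (_ - frob _ _).
by rewrite !trmx_mul !trmxK !mulmxA.
Qed.

Lemma frob_residual_adj m n (D X : 'M[R]_(m, n)) (U : 'M[R]_m) (S dS : 'M[R]_(m, n))
    (V dV : 'M[R]_n) :
  frob D (X *m V - U *m dS - U *m S *m dV^T *m V)
  = frob (D *m V^T) X - frob (U^T *m D) dS - frob (V *m D^T *m U *m S) dV.
Proof.
rewrite !frobBr frob_mulmxr frob_mulmxl frob_mulmxr frob_mulmxl frob_trmx.
by rewrite !trmx_mul !trmxK !mulmxA.
Qed.

Lemma frob_diagpart_adj m n (A X : 'M[R]_(m, n)) (U : 'M[R]_m) (V : 'M[R]_n) :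
  frob A (mxdiagpart (U^T *m X *m V)) = frob (U *m mxdiagpart A *m V^T) X.
Proof. by rewrite frob_diagpart frob_mulmxr frob_mulmxl trmxK mulmxA. Qed.

Lemma frob_hadamard_sym_adj m n (B K : 'M[R]_n) (U : 'M[R]_m) (S X : 'M[R]_(m, n))
    (V : 'M[R]_n) :
  frob B (V *m hadamard K (mxsym (S^T *m U^T *m X *m V)))
  = frob (U *m S *m mxsym (hadamard K (V^T *m B)) *m V^T) X.
Proof.
rewrite frob_mulmxl frob_hadamard frob_sym frob_mulmxr frob_mulmxl.
by rewrite !trmx_mul !trmxK !mulmxA.
Qed.

End VariationAdjoints.


Unset Implicit Arguments.
Set Strict Implicit.

(* m = n + p, i.e. m >= n *)
Theorem proposition1 (R : realFieldType) (n p : nat)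
    (X : 'M[R]_(n + p, n)) (U : 'M[R]_(n + p)) (S : 'M[R]_(n + p, n))
    (V : 'M[R]_n)
    (hU : U^T *m U = 1%:M) (hV : V^T *m V = 1%:M)
    (hX : X = U *m S *m V^T)
    (hSdiag : is_rdiag S)
    (hnz : forall i : 'I_n, sv S i != 0)
    (hdist : forall i j : 'I_n, i != j -> `|sv S i| != `|sv S j|) :
  let K := Kmx S in
  let Sn := usubmx S : 'M[R]_n in
  let U1 := lsubmx U : 'M[R]_(n + p, n) in
  let U2 := rsubmx U : 'M[R]_(n + p, p) in
  (forall (dX : 'M[R]_(n + p, n)) (dU : 'M[R]_(n + p))
          (dS : 'M[R]_(n + p, n)) (dV : 'M[R]_n),
     induced_variation U S V dX dU dS dV ->
     let C := dX *m V - U *m dS - U *m S *m dV^T *m V in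
     [/\ dS = mxdiagpart (U^T *m dX *m V),
         dV = 2%:R *: (V *m hadamard K^T (mxsym (S^T *m U^T *m dX *m V)))
       & dU = row_mx (C *m invmx Sn) (- (U1 *m invmx Sn *m C^T *m U2))])
  /\
  (forall (GU : 'M[R]_(n + p)) (GS : 'M[R]_(n + p, n)) (GV : 'M[R]_n),
     let D := lsubmx GU *m invmx Sn
              - U2 *m (rsubmx GU)^T *m U1 *m invmx Sn in
     let G := D *m V^T
              + U *m mxdiagpart (GS - U^T *m D) *m V^T
              + 2%:R *: (U *m S *m mxsym (hadamard K^T
                           (V^T *m (GV - V *m D^T *m U *m S))) *m V^T) in
     forall (dX : 'M[R]_(n + p, n)) (dU : 'M[R]_(n + p))
            (dS : 'M[R]_(n + p, n)) (dV : 'M[R]_n),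
       induced_variation U S V dX dU dS dV ->
       frob GU dU + frob GS dS + frob GV dV = frob G dX).
Proof.
move=> K Sn U1 U2.
split=> [dX dU dS dV hvar C | GU GS GV D G dX dU dS dV hvar].
  split; first exact: dS_variation hU hV hSdiag hvar.
    exact: dV_variation hU hV hSdiag hvar hdist.
  exact: dU_variation hU hV hSdiag hvar hnz.
have hdS := dS_variation hU hV hSdiag hvar.
have hdV := dV_variation hU hV hSdiag hvar hdist.
have hdU := dU_variation hU hV hSdiag hvar hnz.
have adjS A : frob A dS = frob (U *m mxdiagpart A *m V^T) dX.
  by rewrite hdS frob_diagpart_adj.
have adjV B : frob B dV
    = frob (2%:R *: (U *m S *m mxsym (hadamard K^T (V^T *m B)) *m V^T)) dX.
  by rewrite hdV frobZr frobZl frob_hadamard_sym_adj.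
have adjU : frob GU dU = frob D (dX *m V - U *m dS - U *m S *m dV^T *m V).
  by rewrite hdU frob_split_adj trmx_inv trmx_usubmx_rdiag.
by rewrite adjU frob_residual_adj /G !frobDl -adjS -adjV !frobBl; ring.
Qed.
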